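(* Let $K$ be a field and let $T$ be a tree with $n\ge 1$ edges. Then its cut ideal $I_T$ is minimally generated by $2\cdot 4^{n-1} + 2^{n-1} - 3^n$ quadrics.
   Context: For a finite simple graph $G$ with vertex set $V(G)$ and edge set $E(G)$, an unordered partition $A|B$ of $V(G)$ (into two sets, one of which may be empty) defines the cut $Cut(A|B)$, the set of edges with one endpoint in $A$ and the other in $B$. The cut ideal $I_G$ is the kernel of the $K$-algebra homomorphism $\phi_G: K[q_{A|B} : A|B \text{ unordered partition of } V(G)] \to K[s_{ij}, t_{ij} : \{i,j\} \in E(G)]$, $q_{A|B} \mapsto \prod_{\{i,j\}\in Cut(A|B)} s_{ij} \prod_{\{i,j\}\in E(G)\setminus Cut(A|B)} t_{ij}$. For a tree with $n$ edges this polynomial ring has $2^n$ variables. *)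

From HB Require Import structures.
From mathcomp Require Import all_boot all_order all_algebra.
From mathcomp Require Import fingraph.
From mathcomp.multinomials Require Import mpoly.
Set Implicit Arguments. Unset Strict Implicit. Unset Printing Implicit Defensive.
Import GRing.Theory.
Local Open Scope ring_scope.

Definition is_edge (V : finType) (adj : rel V) : pred {set V} :=
  fun S => [exists i, exists j, adj i j && (S == [set i; j])].

Definition edge (V : finType) (adj : rel V) := {S : {set V} | is_edge adj S}.

Definition simple_graph (V : finType) (adj : rel V) : Prop :=
  ssrbool.symmetric adj /\ irreflexive adj.

(* A tree: a connected simple graph with #|V| - 1 edges
   (equivalently: connected and acyclic). *)
Definition is_tree (V : finType) (adj : rel V) : Prop :=
  [/\ simple_graph adj, (forall x y, connect adj x y) & (0 < #|V|)%N /\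
      #|{: edge adj}| = (#|V| - 1)%N].

(* Unordered partitions A|B of V, represented literally as the unordered
   pair {A, B} with B = V \ A (one block may be empty). *)
Definition is_upartition (V : finType) : pred {set {set V}} :=
  fun P => [exists A : {set V}, P == [set A; ~: A]].

Definition upartition (V : finType) := {P : {set {set V}} | is_upartition P}.

Definition in_cut (V : finType) (adj : rel V) (P : upartition V)
  (e : edge adj) : bool :=
  [exists i, exists j, (val e == [set i; j]) &&
     [exists A in val P, (i \in A) && (j \notin A)]].

Definition qvar (K : fieldType) (V : finType) (P : upartition V)
  : {mpoly K[#|{: upartition V}|]} := 'X_(enum_rank P).

(* Target ring K[s_ij, t_ij] : variables indexed by edge * bool,
   (e, true) = s_e and (e, false) = t_e. *)
Definition tgt_ring (K : fieldType) (V : finType) (adj : rel V) :=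
  {mpoly K[#|{: (edge adj * bool)%type}|]}.

Definition svar (K : fieldType) (V : finType) (adj : rel V) (e : edge adj)
  : tgt_ring K adj := 'X_(enum_rank (e, true)).
Definition tvar (K : fieldType) (V : finType) (adj : rel V) (e : edge adj)
  : tgt_ring K adj := 'X_(enum_rank (e, false)).

Definition cut_monomial (K : fieldType) (V : finType) (adj : rel V)
  (P : upartition V) : tgt_ring K adj :=
  (\prod_(e : edge adj | in_cut P e) @svar K V adj e) *
  (\prod_(e : edge adj | ~~ in_cut P e) @tvar K V adj e).

Definition phiG (K : fieldType) (V : finType) (adj : rel V)
  (p : {mpoly K[#|{: upartition V}|]}) : tgt_ring K adj :=
  mmap (fun c : K => c%:MP) (fun i => @cut_monomial K V adj (enum_val i)) p.

Definition cut_ideal (K : fieldType) (V : finType) (adj : rel V)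
  : pred {mpoly K[#|{: upartition V}|]} := fun p => @phiG K V adj p == 0.

Definition generates_ideal (R : comRingType) (I : pred R) (gs : seq R) : Prop :=
  forall p, I p <-> exists cs : seq R,
      size cs = size gs /\ p = \sum_(i < size gs) cs`_i * gs`_i.

From HB Require Import structures.
From mathcomp Require Import all_boot all_order all_algebra.
From mathcomp.multinomials Require Import mpoly.
From mathcomp Require Import zify ring.
Set Implicit Arguments. Unset Strict Implicit. Unset Printing Implicit Defensive.
Import GRing.Theory.
Local Open Scope ring_scope.

(* For a tree with edge set E, A|B |-> Cut(A|B) is injective by connectedness,
   and there are 2^(|V|-1) = 2^n partitions, so it is a bijection onto the
   subsets of E.  Hence phi_T is the map
   q_C |-> prod_(e in C) s_e prod_(e notin C) t_e, whose kernel contains the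
   quadrics q_A q_B - q_(A :|: B) q_(A :&: B).  Modulo these quadrics a monomial
   q_C1 ... q_Cd straightens to the chain q_D0 ... q_D(d-1), where
   D_j = {e | e lies in more than j of the C_i}; the chain only depends on the
   image of the monomial, so the quadrics with A, B incomparable generate the
   kernel.  These are linearly independent in degree 2, and the kernel has no
   element with terms of degree <= 1, so no generating set is smaller.  Finally
   there are (4^n - 2 * 3^n + 2^n) / 2 unordered incomparable pairs. *)

Section IdealSpan.
Variable R : comPzRingType.
Implicit Types (gs : seq R) (p : R).

Definition in_ideal gs p := exists f : nat -> R, p = \sum_(i < size gs) f i * gs`_i.

Lemma in_idealE gs p :
  (exists cs : seq R, size cs = size gs /\ p = \sum_(i < size gs) cs`_i * gs`_i)
  <-> in_ideal gs p.
Proof.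
split => [[cs [_ ->]]|[f ->]]; first by exists (nth 0 cs).
exists (mkseq f (size gs)); split; first exact: size_mkseq.
by apply: eq_bigr => i _; rewrite nth_mkseq.
Qed.

Lemma in_ideal0 gs : in_ideal gs 0.
Proof. by exists (fun _ => 0); rewrite big1 // => i _; rewrite mul0r. Qed.

Lemma in_idealD gs p q : in_ideal gs p -> in_ideal gs q -> in_ideal gs (p + q).
Proof.
move=> [f ->] [g ->]; exists (fun i => f i + g i).
by rewrite -big_split; apply: eq_bigr => i _; rewrite mulrDl.
Qed.

Lemma in_idealMl gs r p : in_ideal gs p -> in_ideal gs (r * p).
Proof.
move=> [f ->]; exists (fun i => r * f i).
by rewrite mulr_sumr; apply: eq_bigr => i _; rewrite mulrA.
Qed.

Lemma in_ideal_sum gs (I : Type) (r : seq I) (F : I -> R) :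
  (forall i, in_ideal gs (F i)) -> in_ideal gs (\sum_(i <- r) F i).
Proof.
move=> inF; elim: r => [|a r IH]; first by rewrite big_nil; apply: in_ideal0.
by rewrite big_cons; apply: in_idealD.
Qed.

Lemma in_ideal_nth gs k : (k < size gs)%N -> in_ideal gs gs`_k.
Proof.
move=> lt_k; exists (fun i => (i == k)%:R).
rewrite (bigD1 (Ordinal lt_k)) //= eqxx mul1r big1 ?addr0 // => i.
by rewrite -val_eqE /= => /negbTE ->; rewrite mul0r.
Qed.

Lemma in_ideal_mem gs p : p \in gs -> in_ideal gs p.
Proof. by move=> gs_p; rewrite -(nth_index 0 gs_p); apply: in_ideal_nth; rewrite index_mem. Qed.

Lemma rmorph_in_ideal_eq0 (S : pzRingType) (f : {rmorphism R -> S}) gs p :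
  (forall g, g \in gs -> f g = 0) -> in_ideal gs p -> f p = 0.
Proof.
move=> f_gs [a ->]; rewrite rmorph_sum big1 // => i _.
by rewrite rmorphM (f_gs gs`_i) ?mulr0 // mem_nth.
Qed.

End IdealSpan.

Section TreeCuts.
Variables (V : finType) (adj : rel V).

Definition cutset (P : upartition V) : {set edge adj} := [set e | in_cut P e].

Lemma upartitionP (P : upartition V) : exists A, val P = [set A; ~: A].
Proof. by case: P => /= P /existsP [A /eqP ->]; exists A. Qed.

Lemma in_cutE (P : upartition V) (e : edge adj) A x y :
  val P = [set A; ~: A] -> val e = [set x; y] ->
  in_cut P e = ((x \in A) != (y \in A)).
Proof.
move=> hP he; apply/idP/idP.
- case/existsP=> i /existsP [j /andP [/eqP eij /existsP [B /andP [PB /andP [iB jB]]]]].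
  have ij_sep : (i \in A) != (j \in A).
    move: PB; rewrite hP => /set2P [eB|eB]; rewrite eB in iB jB.
      by rewrite iB (negbTE jB).
    by move: iB jB; rewrite !inE; case: (i \in A); case: (j \in A).
  have /set2P ixy : i \in [set x; y] by rewrite -he eij set21.
  have /set2P jxy : j \in [set x; y] by rewrite -he eij set22.
  by move: ij_sep; case: ixy => ->; case: jxy => ->; rewrite ?eqxx // eq_sym.
- move=> xy_sep; apply/existsP; exists x; apply/existsP; exists y; rewrite he eqxx /=.
  apply/existsP; move: xy_sep; case xA: (x \in A) => /= yA.
    by exists A; rewrite hP set21 xA.
  by exists (~: A); rewrite hP set22 !inE xA yA.
Qed.

Lemma is_edge_set2 x y : adj x y -> is_edge adj [set x; y].
Proof. by move=> axy; apply/existsP; exists x; apply/existsP; exists y; rewrite axy eqxx. Qed.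

Lemma cutset_inj : (0 < #|V|)%N -> (forall x y, connect adj x y) -> injective cutset.
Proof.
move=> V_gt0 conn P Q eqPQ.
have [A hA] := upartitionP P; have [B hB] := upartitionP Q.
have sep_eq x y : adj x y -> ((x \in A) != (y \in A)) = ((x \in B) != (y \in B)).
  move=> axy; pose e : edge adj := exist _ [set x; y] (is_edge_set2 axy).
  have := congr1 (fun S : {set edge adj} => e \in S) eqPQ; rewrite /cutset !inE.
  by rewrite (@in_cutE P e A x y hA erefl) (@in_cutE Q e B x y hB erefl).
have /card_gt0P [v0 _] := V_gt0.
pose agree := [pred y | (y \in A) == (y \in B)].
have agree_closed : closed adj agree.
  move=> x y axy; move: (sep_eq x y axy); rewrite !inE.
  by case: (x \in A); case: (y \in A); case: (x \in B); case: (y \in B).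
have agreeE y : (y \in agree) = (v0 \in agree).
  by rewrite (closed_connect agree_closed (conn v0 y)).
apply: val_inj; rewrite hA hB.
case agree_v0: (v0 \in agree).
- suff -> : A = B by [].
  by apply/setP=> y; move: (agreeE y); rewrite agree_v0 inE => /eqP.
- suff -> : A = ~: B by rewrite setCK setUC.
  apply/setP=> y; move: (agreeE y); rewrite agree_v0 !inE.
  by case: (y \in A); case: (y \in B).
Qed.

Lemma card_upartition_ge : (0 < #|V|)%N -> (2 ^ (#|V| - 1) <= #|{: upartition V}|)%N.
Proof.
move=> V_gt0; have /card_gt0P [v0 _] := V_gt0.
pose S := [set A : {set V} | v0 \in A].
have card_S : (2 * #|S| = 2 ^ #|V|)%N.
  have card_SC : #|[predC S]| = #|S|.
    rewrite -(card_imset _ (@setC_inj V)); apply: eq_card => A; rewrite !inE.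
    apply/idP/imsetP => [vA|[B]]; last by rewrite inE => vB ->; rewrite inE vB.
    by exists (~: A); rewrite ?setCK // inE inE.
  rewrite mul2n -addnn -{2}card_SC cardC.
  by rewrite -cardsT -powersetT card_powerset cardsT.
have S_le : (#|S| <= #|{: upartition V}|)%N.
  rewrite card_sig -(card_in_imset (f := fun A => [set A; ~: A])).
    apply: subset_leq_card; apply/subsetP => P /imsetP [A _ ->].
    by rewrite inE; apply/existsP; exists A.
  move=> A B; rewrite !inE => vA vB /setP eqAB.
  have := eqAB A; rewrite set21 in_set2 => /esym /orP [/eqP //|/eqP AB].
  by move: vA; rewrite AB inE vB.
rewrite -(@leq_pmul2l 2) // -expnS subn1 prednK // -card_S.
by rewrite leq_mul2l S_le orbT.
Qed.

Lemma cutset_bij : is_tree adj -> bijective cutset.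
Proof.
move=> [_ conn [V_gt0 card_edge]]; apply: inj_card_bij; first exact: cutset_inj.
rewrite -cardsT -powersetT card_powerset cardsT card_edge.
exact: card_upartition_ge.
Qed.

End TreeCuts.

Section MultinomialFacts.
Variables (n : nat) (S : nzRingType).

Lemma mnm1D_inj (a b a' b' : 'I_n) : (U_(a) + U_(b))%MM = (U_(a') + U_(b'))%MM ->
  (a = a' /\ b = b') \/ (a = b' /\ b = a').
Proof.
move=> eq_ab; have := congr1 (fun m : 'X_{1..n} => m a) eq_ab.
rewrite !mnmDE !mnm1E eqxx.
have [e_a'|_] := a' =P a.
  left; split; first by rewrite e_a'.
  by move: eq_ab; rewrite e_a' => /addmI/eqP; rewrite eq_mnm1 => /eqP.
have [e_b'|//] := b' =P a.
right; split; first by rewrite e_b'.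
by move: eq_ab; rewrite e_b' [RHS]addmC => /addmI/eqP; rewrite eq_mnm1 => /eqP.
Qed.

Lemma mcoeffM_deg2 (a q : {mpoly S[n]}) (m : 'X_{1..n}) :
  (forall m0, (mdeg m0 <= 1)%N -> q@_m0 = 0) ->
  mdeg m = 2%N -> (a * q)@_m = a@_0%MM * q@_m.
Proof.
move=> q_low deg_m; set a0 := a@_0%MM; set a' := a - a0%:MP.
have a'0 : a'@_0%MM = 0 by rewrite mcoeffB mcoeffC eqxx mulr1 subrr.
rewrite -[a in (a * q)@_m](subrK a0%:MP) mulrDl mcoeffD mcoeffCM -/a'.
suff -> : (a' * q)@_m = 0 by rewrite add0r.
apply/eqP; rewrite mcoeff_eq0; apply/negP => /msuppM_le /allpairsP [[m1 m2] [/= a'_m1 q_m2 em]].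
have : (0 < mdeg m1)%N.
  rewrite lt0n mdeg_eq0; apply: contraTneq a'_m1 => ->.
  by rewrite mcoeff_msupp a'0 eqxx.
have : (1 < mdeg m2)%N.
  rewrite ltnNge; apply: contraTN q_m2 => le.
  by rewrite mcoeff_msupp q_low // eqxx.
by move: deg_m; rewrite em mdegD; lia.
Qed.

Lemma multinom_sumU (m : 'X_{1..n}) : exists s : seq 'I_n, m = (\sum_(i <- s) U_(i))%MM.
Proof.
move: {2}(mdeg m) (erefl (mdeg m)) => d; elim: d m => [|d IH] m deg_m.
  by exists [::]; rewrite big_nil; apply/eqP; rewrite -mdeg_eq0 deg_m.
have [i mi|m0] := pickP (fun i => m i != 0%N); last first.
  by move: deg_m; rewrite mdegE big1 // => i _; apply/eqP; rewrite -[_ == _]negbK m0.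
have le_Um : (U_(i) <= m)%MM by rewrite lep1mP.
have [|s m_s] := IH (m - U_(i))%MM.
  by move: deg_m; rewrite -{1}(submK le_Um) mdegD mdeg1 addn1 => /eq_add_S.
by exists (i :: s); rewrite big_cons -m_s addmC submK.
Qed.

End MultinomialFacts.

(* The variables q_i are identified with the subsets [c i] of E (for a tree,
   the cuts), and [rk (e, true)], [rk (e, false)] index s_e and t_e. *)
Section BooleanCutIdeal.
Variables (K : fieldType) (E : finType) (M T : nat).
Variables (c : 'I_M -> {set E}) (cidx : {set E} -> 'I_M).
Hypotheses (cK : cancel cidx c) (cidxK : cancel c cidx).
Variable rk : E * bool -> 'I_T.
Hypothesis rk_inj : injective rk.
Variable h : 'I_M -> {mpoly K[T]}.
Hypothesis hE : forall i, h i =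
  (\prod_(e in c i) 'X_(rk (e, true))) * \prod_(e in ~: c i) 'X_(rk (e, false)).

Local Notation R := {mpoly K[M]}.
Local Notation phi := (mmap (@mpolyC T K) h).

Definition cut_exp (C : {set E}) : 'X_{1..T} := (\sum_(e : E) U_(rk (e, e \in C)))%MM.

Definition image_exp (m : 'X_{1..M}) : 'X_{1..T} := (\sum_(i < M) cut_exp (c i) *+ m i)%MM.

Lemma h_monomial i : h i = 'X_[cut_exp (c i)].
Proof.
rewrite hE /cut_exp -mprodXE [RHS](bigID (fun e => e \in c i)) /=; congr (_ * _).
  by apply: eq_bigr => e ->.
by apply: eq_big => [e|e]; rewrite !inE // => /negbTE ->.
Qed.

Lemma phi_monomial m : phi 'X_[m] = 'X_[image_exp m].
Proof.
rewrite mmapX /mmap1 /image_exp -mprodXnE; apply: eq_bigr => i _.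
by rewrite h_monomial.
Qed.

Lemma phi_var i : phi 'X_i = 'X_[cut_exp (c i)].
Proof. by rewrite mmapX mmap1U h_monomial. Qed.

Definition quadric (i j : 'I_M) : R :=
  'X_i * 'X_j - 'X_(cidx (c i :|: c j)) * 'X_(cidx (c i :&: c j)).

Lemma cut_expUI A B : (cut_exp A + cut_exp B = cut_exp (A :|: B) + cut_exp (A :&: B))%MM.
Proof.
rewrite /cut_exp -!big_split /=; apply: eq_bigr => e _; rewrite !inE.
by case: (e \in A); case: (e \in B) => //=; rewrite addmC.
Qed.

Lemma phi_quadric i j : phi (quadric i j) = 0.
Proof. by rewrite rmorphB !rmorphM /= !phi_var !cK -!mpolyXD cut_expUI subrr. Qed.

Lemma quadricC i j : quadric i j = quadric j i.
Proof. by rewrite /quadric mulrC setUC setIC. Qed.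

Lemma quadric_subset i j : c i \subset c j -> quadric i j = 0.
Proof.
move=> sij; rewrite /quadric (setUidPr sij) (setIidPl sij) !cidxK.
by rewrite mulrC subrr.
Qed.

Definition incomparable (A B : {set E}) := ~~ (A \subset B) && ~~ (B \subset A).

Definition incomparable_pairs : seq ('I_M * 'I_M) :=
  enum [pred p : 'I_M * 'I_M | (p.1 < p.2)%N && incomparable (c p.1) (c p.2)].

Definition quadrics : seq R := [seq quadric p.1 p.2 | p <- incomparable_pairs].

Lemma quadric_in_ideal i j : in_ideal quadrics (quadric i j).
Proof.
have [sij|nsij] := boolP (c i \subset c j).
  by rewrite quadric_subset //; apply: in_ideal0.
have [sji|nsji] := boolP (c j \subset c i).
  by rewrite quadricC quadric_subset //; apply: in_ideal0.
have : i != j by apply: contraNneq nsij => ->.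
case: (ltngtP i j) => [lt_ij|gt_ij|/val_inj ->]; last by rewrite eqxx.
- move=> _; apply: in_ideal_mem; apply/mapP; exists (i, j) => //.
  by rewrite mem_enum inE /= lt_ij /incomparable nsij nsji.
- move=> _; rewrite quadricC; apply: in_ideal_mem; apply/mapP; exists (j, i) => //.
  by rewrite mem_enum inE /= gt_ij /incomparable nsij nsji.
Qed.

Lemma quadrics_homog : all (fun g => g \is 2.-homog) quadrics.
Proof.
apply/allP => q /mapP [p _ ->]; rewrite /quadric -!mpolyXD.
by rewrite rpredB // dhomogX /= mdegD !mdeg1.
Qed.

Definition qmonomial (s : seq 'I_M) : R := \prod_(i <- s) 'X_i.

Definition cover_count (s : seq 'I_M) (e : E) : nat := count (fun i => e \in c i) s.

Definition chain_monomial (d : nat) (a : E -> nat) : R :=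
  \prod_(j < d) 'X_(cidx [set e | (j < a e)%N]).

(* Replacing q_A q_B by q_(A :|: B) q_(A :&: B) preserves the cover counts;
   done along the list it moves the union of all the sets to the front. *)
Lemma straighten_step t a : exists b t', [/\ size t' = size t,
   in_ideal quadrics (qmonomial (a :: t) - 'X_b * qmonomial t'),
   forall e, cover_count (a :: t) e = ((e \in c b) + cover_count t' e)%N &
   c b = [set e | (0 < cover_count (a :: t) e)%N]].
Proof.
elim: t a => [|a' t IH] a.
  exists a, [::]; split => //.
  - by rewrite /qmonomial !big_cons !big_nil mulr1 subrr; apply: in_ideal0.
  - by apply/setP => e; rewrite inE /cover_count /= addn0 lt0b.
have [b0 [t0 [size_t0 ideal_t0 count_t0 cb0]]] := IH a'.
exists (cidx (c a :|: c b0)), (cidx (c a :&: c b0) :: t0); split.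
- by rewrite /= size_t0.
- have -> : qmonomial [:: a, a' & t] -
      'X_(cidx (c a :|: c b0)) * qmonomial (cidx (c a :&: c b0) :: t0) =
    'X_a * (qmonomial (a' :: t) - 'X_b0 * qmonomial t0) + qmonomial t0 * quadric a b0.
    by rewrite /qmonomial !big_cons /quadric; ring.
  by apply: in_idealD; apply: in_idealMl => //; apply: quadric_in_ideal.
- move=> e; have := count_t0 e; rewrite /cover_count /= !cK !inE => ->.
  by case: (e \in c a); case: (e \in c b0) => /=; lia.
- apply/setP => e; rewrite cK !inE.
  have -> : (e \in c b0) = (0 < cover_count (a' :: t) e)%N by rewrite cb0 inE.
  by rewrite /cover_count /=; case: (e \in c a).
Qed.

Lemma straighten s :
  in_ideal quadrics (qmonomial s - chain_monomial (size s) (cover_count s)).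
Proof.
have [d size_s] : exists d, size s = d by exists (size s).
rewrite size_s; elim: d s size_s => [|d IH] [|a t] // size_at.
  by rewrite /qmonomial /chain_monomial big_nil big_ord0 subrr; apply: in_ideal0.
have [b [t' [size_t' ideal_t' count_t' cb]]] := straighten_step t a.
have {}IH := IH t' (etrans size_t' (eq_add_S _ _ size_at)).
have -> : chain_monomial d.+1 (cover_count (a :: t)) =
    'X_b * chain_monomial d (cover_count t').
  rewrite /chain_monomial big_ord_recl -cb cidxK; congr (_ * _).
  apply: eq_bigr => j _; congr 'X_(cidx _); apply/setP => e; rewrite !inE lift0.
  have cb_e : (e \in c b) = (0 < cover_count (a :: t) e)%N by rewrite cb inE.
  by move: (count_t' e) cb_e; case: (e \in c b) => /= ->; lia.
have -> : qmonomial (a :: t) - 'X_b * chain_monomial d (cover_count t') =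
    (qmonomial (a :: t) - 'X_b * qmonomial t') +
    'X_b * (qmonomial t' - chain_monomial d (cover_count t')) by ring.
by apply: in_idealD => //; apply: in_idealMl.
Qed.

Lemma image_expD m1 m2 : image_exp (m1 + m2)%MM = (image_exp m1 + image_exp m2)%MM.
Proof.
apply/mnmP => k; rewrite mnmDE /image_exp !mnm_sumE -big_split; apply: eq_bigr => i _.
by rewrite !mulmnE mnmDE mulnDr.
Qed.

Lemma image_exp0 : image_exp 0%MM = 0%MM.
Proof.
apply/mnmP => k; rewrite /image_exp mnm_sumE mnm0E big1 // => i _.
by rewrite mulmnE mnm0E muln0.
Qed.

Lemma image_expU i : image_exp U_(i)%MM = cut_exp (c i).
Proof.
apply/mnmP => k; rewrite /image_exp mnm_sumE (bigD1 i) //= mulmnE mnm1E eqxx muln1.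
by rewrite big1 ?addn0 // => j /negbTE ne; rewrite mulmnE mnm1E eq_sym ne muln0.
Qed.

Lemma image_exp_sum s :
  image_exp (\sum_(i <- s) U_(i))%MM = (\sum_(i <- s) cut_exp (c i))%MM.
Proof.
elim: s => [|a s IH]; first by rewrite !big_nil image_exp0.
by rewrite !big_cons image_expD image_expU IH.
Qed.

Lemma mdeg_cut_exp C : mdeg (cut_exp C) = #|E|.
Proof.
rewrite /cut_exp mdeg_sum (eq_bigr (fun _ => 1%N)) ?sum1_card // => e _.
exact: mdeg1.
Qed.

Lemma cut_exp_true C e : cut_exp C (rk (e, true)) = (e \in C).
Proof.
rewrite /cut_exp mnm_sumE (bigD1 e) //= mnm1E (inj_eq rk_inj) xpair_eqE eqxx /= eqb_id.
by rewrite big1 ?addn0 // => e' /negbTE ne; rewrite mnm1E (inj_eq rk_inj) xpair_eqE ne.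
Qed.

Lemma cut_exp_inj : injective cut_exp.
Proof.
move=> A B eqAB; apply/setP => e.
have := congr1 (fun m : 'X_{1..T} => m (rk (e, true))) eqAB; rewrite /= !cut_exp_true.
by case: (e \in A); case: (e \in B).
Qed.

Lemma mdeg_image_exp m : mdeg (image_exp m) = (mdeg m * #|E|)%N.
Proof.
rewrite /image_exp mdeg_sum mdegE big_distrl /=; apply: eq_bigr => i _.
by rewrite mdegMn mdeg_cut_exp mulnC.
Qed.

Hypothesis E_gt0 : (0 < #|E|)%N.

(* On the image of phi, each q_C contributes degree #|E| and the exponent of
   s_e counts the sets containing e; this recovers the straightened chain. *)
Definition chain_of (u : 'X_{1..T}) : R :=
  chain_monomial (mdeg u %/ #|E|) (fun e => u (rk (e, true))).

Lemma eq_chain_monomial d a a' : a =1 a' -> chain_monomial d a = chain_monomial d a'.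
Proof.
move=> eq_a; apply: eq_bigr => j _; congr 'X_(cidx _).
by apply/setP => e; rewrite !inE eq_a.
Qed.

Lemma chain_of_image_sum s :
  chain_of (image_exp (\sum_(i <- s) U_(i))%MM) = chain_monomial (size s) (cover_count s).
Proof.
rewrite /chain_of image_exp_sum mdeg_sum (eq_bigr (fun _ => #|E|)); last first.
  by move=> i _; rewrite mdeg_cut_exp.
rewrite big_const_seq count_predT iter_addn_0 mulnC mulnK //.
apply: eq_chain_monomial => e; rewrite mnm_sumE.
elim: s => [|a s IH]; first by rewrite big_nil.
by rewrite big_cons cut_exp_true IH.
Qed.

Lemma monomial_straighten m : in_ideal quadrics ('X_[m] - chain_of (image_exp m)).
Proof.
have [s ->] := multinom_sumU m.
by rewrite chain_of_image_sum -mprodXE; apply: straighten.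
Qed.

Lemma mcoeff_phi p u : (phi p)@_u = \sum_(m <- msupp p | image_exp m == u) p@_m.
Proof.
rewrite {1}[p]mpolyE rmorph_sum raddf_sum /= [RHS]big_mkcond /=; apply: eq_bigr => m _.
rewrite mmapZ /= mul_mpolyC phi_monomial mcoeffZ mcoeffX.
by case: eqP => _; rewrite ?mulr1 ?mulr0.
Qed.

Lemma sum_by_image (r : seq 'X_{1..M}) (G : 'X_{1..M} -> K) :
  \sum_(m <- r) G m *: chain_of (image_exp m) =
  \sum_(u <- undup (map image_exp r)) (\sum_(m <- r | image_exp m == u) G m) *: chain_of u.
Proof.
symmetry; rewrite (eq_bigr (fun u => \sum_(m <- r)
    if image_exp m == u then G m *: chain_of (image_exp m) else 0)); last first.
  move=> u _; rewrite scaler_suml big_mkcond; apply: eq_bigr => m _.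
  by case: eqP => [->|_] //; rewrite scale0r.
rewrite exchange_big /=; apply: eq_big_seq => m r_m.
rewrite (bigD1_seq (image_exp m)) ?undup_uniq ?mem_undup ?map_f //= eqxx.
by rewrite big1 ?addr0 // => u; rewrite eq_sym => /negbTE ->.
Qed.

(* Each monomial straightens to the chain of its image; in a kernel element the
   chains of a common image cancel, since their coefficients sum to a
   coefficient of [phi p] = 0. *)
Lemma ker_in_ideal p : phi p = 0 -> in_ideal quadrics p.
Proof.
move=> phi_p.
have -> : p = \sum_(m <- msupp p) p@_m *: ('X_[m] - chain_of (image_exp m)) +
              \sum_(m <- msupp p) p@_m *: chain_of (image_exp m).
  rewrite -big_split /= {1}[p]mpolyE; apply: eq_bigr => m _.
  by rewrite scalerBr subrK.
have -> : \sum_(m <- msupp p) p@_m *: chain_of (image_exp m) = 0.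
  by rewrite sum_by_image big1 // => u _; rewrite -mcoeff_phi phi_p mcoeff0 scale0r.
rewrite addr0; apply: in_ideal_sum => m; rewrite -mul_mpolyC.
exact/in_idealMl/monomial_straighten.
Qed.

Lemma quadrics_generate : generates_ideal (fun p => phi p == 0) quadrics.
Proof.
move=> p; rewrite in_idealE; split => [/eqP|]; first exact: ker_in_ideal.
move=> p_in; apply/eqP; apply: rmorph_in_ideal_eq0 p_in => q /mapP [[i j] _ ->].
exact: phi_quadric.
Qed.

Lemma image_exp_inj_low m m0 : (mdeg m0 <= 1)%N -> image_exp m = image_exp m0 -> m = m0.
Proof.
move=> m0_le eq_img.
have deg_m : mdeg m = mdeg m0.
  by apply/eqP; rewrite -(eqn_pmul2r E_gt0) -!mdeg_image_exp eq_img.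
move: m0_le; rewrite leq_eqVlt ltnS leqn0 => /orP [deg1|/eqP deg0].
  have /mdeg1P [i /eqP m0_i] := deg1.
  have /mdeg1P [j /eqP m_j] : mdeg m == 1%N by rewrite deg_m.
  move: eq_img; rewrite m_j m0_i !image_expU => /cut_exp_inj /(congr1 cidx).
  by rewrite !cidxK => ->.
have m0_0 : m0 = 0%MM by apply/eqP; rewrite -mdeg_eq0 deg0.
by rewrite m0_0; apply/eqP; rewrite -mdeg_eq0 deg_m deg0.
Qed.

(* A monomial of degree <= 1 is the only preimage of its image exponent. *)
Lemma ker_mcoeff_low p m0 : phi p = 0 -> (mdeg m0 <= 1)%N -> p@_m0 = 0.
Proof.
move=> phi_p m0_le; have := congr1 (mcoeff (image_exp m0)) phi_p.
rewrite mcoeff_phi mcoeff0 (eq_bigl (pred1 m0)) => [|m]; last first.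
  by apply/eqP/eqP => [/(image_exp_inj_low m0_le)|->].
have [p_m0|/memN_msupp_eq0 //] := boolP (m0 \in msupp p).
by rewrite -big_filter filter_pred1_uniq ?msupp_uniq // big_seq1.
Qed.

Definition pair_exp (p : 'I_M * 'I_M) : 'X_{1..M} := (U_(p.1) + U_(p.2))%MM.

Lemma mdeg_pair_exp p : mdeg (pair_exp p) = 2%N.
Proof. by rewrite /pair_exp mdegD !mdeg1. Qed.

Lemma mcoeff_quadric p q : p \in incomparable_pairs -> q \in incomparable_pairs ->
  (quadric p.1 p.2)@_(pair_exp q) = (p == q)%:R.
Proof.
rewrite !mem_enum !inE => /andP [lt_p _] /andP [lt_q /andP [q12 q21]].
rewrite /quadric /pair_exp -!mpolyXD mcoeffB !mcoeffX.
have -> : ((U_(p.1) + U_(p.2))%MM == (U_(q.1) + U_(q.2))%MM) = (p == q).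
  apply/eqP/eqP => [/mnm1D_inj [[e1 e2]|[e1 e2]]|->] //.
    by case: p q e1 e2 {lt_p lt_q q12 q21} => ? ? [? ?] /= -> ->.
  by move: lt_p lt_q; rewrite e1 e2 => l1 l2; have := ltn_trans l1 l2; rewrite ltnn.
have sIU : c p.1 :&: c p.2 \subset c p.1 :|: c p.2.
  exact: subset_trans (subsetIl _ _) (subsetUl _ _).
suff -> : ((U_(cidx (c p.1 :|: c p.2)) + U_(cidx (c p.1 :&: c p.2)))%MM ==
           (U_(q.1) + U_(q.2))%MM) = false by rewrite subr0.
apply/negP => /eqP /mnm1D_inj [] [e1 e2]; move: q12 q21;
  by rewrite -e1 -e2 !cK sIU.
Qed.

(* Expressing each quadric through generators [hs] of the kernel gives, on the
   degree-2 coefficients [pair_exp], a factorisation A *m B = 1 of the identity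
   matrix of size [size incomparable_pairs] through [size hs]. *)
Lemma ker_generators_size hs :
  generates_ideal (fun p => phi p == 0) hs -> (size incomparable_pairs <= size hs)%N.
Proof.
move=> gen_hs.
have hs_ker x : x \in hs -> phi x = 0.
  move=> hs_x; apply/eqP/gen_hs/in_idealE; exact: in_ideal_mem.
pose pt := in_tuple incomparable_pairs.
have quadric_hs (k : 'I_(size incomparable_pairs)) :
    in_ideal hs (quadric (tnth pt k).1 (tnth pt k).2).
  by apply/in_idealE/gen_hs/eqP; apply: phi_quadric.
have [f hf] := fin_all_exists quadric_hs.
pose A := \matrix_(k < size incomparable_pairs, i < size hs) (f k i)@_0%MM.
pose B := \matrix_(i < size hs, l < size incomparable_pairs) (hs`_i)@_(pair_exp (tnth pt l)).
have AB1 : A *m B = 1%:M.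
  have tnth_inj : injective (tnth pt) by apply/tuple_uniqP; apply: enum_uniq.
  apply/matrixP => k l; rewrite !mxE -(inj_eq tnth_inj) -mcoeff_quadric ?mem_tnth //.
  rewrite hf raddf_sum; apply: eq_bigr => i _.
  rewrite !mxE; symmetry; apply: mcoeffM_deg2 (mdeg_pair_exp _) => m0.
  by apply: ker_mcoeff_low; apply/hs_ker/mem_nth.
have := mxrankM_maxr A B; rewrite AB1 mxrank1 => le_rank.
exact: leq_trans le_rank (rank_leq_row B).
Qed.

End BooleanCutIdeal.

Lemma card_swap (I : finType) (P : pred (I * I)) : #|[pred p | P (p.2, p.1)]| = #|P|.
Proof.
have swapK : involutive (fun p : I * I => (p.2, p.1)) by case.
rewrite -(card_imset (mem P) (inv_inj swapK)); apply: eq_card => p.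
rewrite !inE; apply/idP/imsetP => [Pp|[q Pq ->]]; last by rewrite swapK.
by exists (p.2, p.1); rewrite ?swapK.
Qed.

Section IncomparableCount.
Variables (E : finType) (M : nat).
Variables (c : 'I_M -> {set E}) (cidx : {set E} -> 'I_M).
Hypotheses (cK : cancel cidx c) (cidxK : cancel c cidx).

Lemma card_index : M = (2 ^ #|E|)%N.
Proof.
have c_bij : bijective c by exists cidx.
rewrite -{1}(card_ord M) (bij_eq_card c_bij).
by rewrite -cardsT -powersetT card_powerset cardsT.
Qed.

(* A pair C1 \subset C2 is coded by the map sending e to [Some true] on C1,
   [Some false] on C2 :\: C1 and [None] outside C2. *)
Lemma card_subset_pairs :
  #|[pred p : 'I_M * 'I_M | c p.1 \subset c p.2]| = (3 ^ #|E|)%N.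
Proof.
pose code (f : {ffun E -> option bool}) :=
  (cidx [set e | f e == Some true], cidx [set e | f e != None]).
have code_inj : injective code.
  move=> f1 f2 [/(congr1 c) e1 /(congr1 c) e2]; rewrite !cK in e1 e2.
  apply/ffunP => e; move/setP/(_ e): e1; move/setP/(_ e): e2; rewrite !inE.
  by case: (f1 e) => [[]|]; case: (f2 e) => [[]|].
have -> : (3 ^ #|E| = #|{ffun E -> option bool}|)%N.
  by rewrite card_ffun card_option card_bool.
rewrite -cardsT -(card_imset _ code_inj).
apply: eq_card => -[i j]; rewrite !inE /=; apply/idP/imsetP => [sij|[f _ [-> ->]]].
  exists [ffun e => if e \in c i then Some true else if e \in c j then Some false else None].
    by [].
  congr (_, _); rewrite -[LHS]cidxK; congr cidx; apply/setP => e; rewrite !inE ffunE.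
    by case: (e \in c i); case: (e \in c j).
  by case: ifP => [/(subsetP sij) ->|]; case: (e \in c j).
by rewrite !cK; apply/subsetP => e; rewrite !inE => /eqP ->.
Qed.

Lemma card_incomparable_pairs : (0 < #|E|)%N ->
  size (incomparable_pairs c) = (2 * 4 ^ #|E|.-1 + 2 ^ #|E|.-1 - 3 ^ #|E|)%N.
Proof.
move=> E_gt0; rewrite /incomparable_pairs -cardE.
set lt_incomp := [pred p | _].
pose incomp := [pred p : 'I_M * 'I_M | incomparable (c p.1) (c p.2)].
pose sub12 := [pred p : 'I_M * 'I_M | c p.1 \subset c p.2].
pose sub21 := [pred p : 'I_M * 'I_M | c p.2 \subset c p.1].
have halves : (#|lt_incomp| + #|lt_incomp| = #|incomp|)%N.
  rewrite -(cardID [pred p : 'I_M * 'I_M | (p.1 < p.2)%N] incomp); congr (_ + _).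
    by apply: eq_card => p; rewrite !inE andbC.
  rewrite -(card_swap lt_incomp); apply: eq_card => -[i j]; rewrite !inE /incomparable /=.
  by case: (ltngtP i j) => [|_|/val_inj ->]; rewrite ?subxx ?andbF //= andbC.
have compl : (#|incomp| + #|[predU sub12 & sub21]| = 4 ^ #|E|)%N.
  have -> : (4 ^ #|E| = #|{: 'I_M * 'I_M}|)%N.
    by rewrite card_prod card_ord card_index -expnMn.
  rewrite -(cardC incomp); congr (_ + _).
  by apply: eq_card => p; rewrite !inE /incomparable negb_and !negbK.
have card12 : #|sub12| = (3 ^ #|E|)%N := card_subset_pairs.
have card21 : #|sub21| = (3 ^ #|E|)%N by rewrite -card12 -(card_swap sub12); apply: eq_card.
have card_eq : #|[predI sub12 & sub21]| = M.
  have diag_inj : injective (fun i : 'I_M => (i, i)) by move=> i j [].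
  rewrite -[RHS]card_ord -[RHS]cardsT -[RHS](card_imset _ diag_inj).
  apply: eq_card => -[i j]; rewrite !inE /= -eqEsubset.
  apply/eqP/imsetP => [/(congr1 cidx)|[k _ [-> ->]]] //.
  by rewrite !cidxK => ->; exists j.
have incl_excl : (#|[predU sub12 & sub21]| + M = 3 ^ #|E| + 3 ^ #|E|)%N.
  by have := cardUI sub12 sub21; rewrite card_eq card12 card21.
move: halves compl incl_excl.
move: #|lt_incomp| #|incomp| #|[predU sub12 & sub21]| => x y z; rewrite card_index.
by case: #|E| E_gt0 => // k _; rewrite /= !expnS; lia.
Qed.

End IncomparableCount.

Theorem corollary4p2 (K : fieldType) (V : finType) (adj : rel V) :
  is_tree adj -> (1 <= #|{: edge adj}|)%N ->
  let n := #|{: edge adj}| in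
  let N := (2 * 4 ^ n.-1 + 2 ^ n.-1 - 3 ^ n)%N in
  (exists gs : seq {mpoly K[#|{: upartition V}|]},
      [/\ size gs = N, all (fun g => g \is 2.-homog) gs &
          generates_ideal (@cut_ideal K V adj) gs]) /\
  (forall gs : seq {mpoly K[#|{: upartition V}|]},
      generates_ideal (@cut_ideal K V adj) gs -> (N <= size gs)%N).
Proof.
move=> tree n_gt0 n N.
have [cutset_inv cutsetK cutset_invK] := cutset_bij tree.
pose c (i : 'I_#|{: upartition V}|) := cutset adj (enum_val i).
pose cidx (C : {set edge adj}) := enum_rank (cutset_inv C).
have cK : cancel cidx c by move=> C; rewrite /c /cidx enum_rankK cutset_invK.
have cidxK : cancel c cidx by move=> i; rewrite /c /cidx cutsetK enum_valK.
pose h (i : 'I_#|{: upartition V}|) := @cut_monomial K V adj (enum_val i).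
have hE i : h i = (\prod_(e in c i) 'X_(enum_rank (e, true))) *
                  \prod_(e in ~: c i) 'X_(enum_rank (e, false)).
  by rewrite /h /cut_monomial; congr (_ * _); apply: eq_bigl => e; rewrite !inE.
rewrite /N -(card_incomparable_pairs cK cidxK n_gt0); split.
  exists (quadrics K c cidx); split; first by rewrite size_map.
    exact: quadrics_homog.
  exact: (quadrics_generate cK cidxK (@enum_rank_inj _) hE n_gt0).
exact: (ker_generators_size cK cidxK (@enum_rank_inj _) hE n_gt0).
Qed.
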